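(* Consider an imprecise hidden Markov model as in the context with fixed output sequence $o_{1:n}$, under the positivity assumption. Let $k\in\{1,\dots,n-1\}$ and $z_{k-1}\in\mathcal{X}_{k-1}$. Then the set of state sequences produced by the optimal tree construction (described in the context) from the candidate set $\mathrm{Mog}(\mathcal{X}_{k:n}\mid z_{k-1},o_{k:n})$ is exactly $\mathrm{opt}(\mathcal{X}_{k:n}\mid z_{k-1},o_{k:n})$.
   Context: Setting: $n\ge1$; $\mathcal{X}_0=\{x_0\}$ a singleton; finite non-empty $\mathcal{X}_1,\dots,\mathcal{X}_n$, $\mathcal{O}_1,\dots,\mathcal{O}_n$; $\mathcal{X}_{k:\ell}=\times_{r=k}^\ell\mathcal{X}_r$, similarly $\mathcal{O}_{k:\ell}$; $\oplus$ denotes concatenation of sequences. Coherent lower previsions $\underline{P}$ satisfy $\underline{P}(f)\ge\min f$, $\underline{P}(\lambda f)=\lambda\underline{P}(f)$ ($\lambda\ge0$), $\underline{P}(f+g)\ge\underline{P}(f)+\underline{P}(g)$; $\overline{P}(f)=-\underline{P}(-f)$; $\underline{P}(A)=\underline{P}(\mathbb{I}_A)$. Local models: coherent $\underline{Q}_k(\cdot\mid z_{k-1})$ on gambles on $\mathcal{X}_k$ and $\underline{S}_k(\cdot\mid z_k)$ on gambles on $\mathcal{O}_k$. Joint models: $\underline{E}_n(\cdot\mid z_n):=\underline{S}_n(\cdot\mid z_n)$; for $k<n$, $\underline{E}_k(\cdot\mid X_k)$ is the conditionally independent natural extension of $\underline{S}_k(\cdot\mid X_k)$ and $\underline{P}_{k+1}(\cdot\mid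 X_k)$ (pointwise smallest separately coherent conditional lower prevision on gambles on $\mathcal{X}_{k+1:n}\times\mathcal{O}_{k:n}$ jointly coherent with and extending both, such that given $X_k$, $O_k$ and $(X_{k+1:n},O_{k+1:n})$ are mutually epistemically irrelevant); $\underline{P}_k(f\mid z_{k-1}):=\underline{Q}_k\big(\sum_{z_k}\mathbb{I}_{\{z_k\}}\underline{E}_k(f(z_k,\cdot)\mid z_k)\mid z_{k-1}\big)$. Positivity assumption: $\overline{Q}_k(\{z_k\}\mid z_{k-1})>0$, $\overline{S}_k(\{o_k\}\mid z_k)>0$ for all arguments. $\mathrm{opt}(\mathcal{X}_{k:n}\mid z_{k-1},o_{k:n})$ is the set of $\hat{x}_{k:n}$ with $\underline{P}_k(\mathbb{I}_{o_{k:n}}[\mathbb{I}_{x_{k:n}}-\mathbb{I}_{\hat{x}_{k:n}}]\mid z_{k-1})\le0$ for all $x_{k:n}\in\mathcal{X}_{k:n}$. Auxiliary quantities (for the fixed $o_{1:n}$): for $z_{k:n}\in\mathcal{X}_{k:n}$, $\alpha_k(z_{k:n}):=\overline{S}_k(\{o_k\}\mid z_k)\prod_{i=k+1}^n\overline{S}_i(\{o_i\}\mid z_i)\overline{Q}_i(\{z_i\}\mid z_{i-1})$ and $\beta_k(z_{k:n})$ the same with lower instead of upper previsions; $\alpha^{\max}_k(x_k):=\max\{\alpha_k(z_{k:n}):z_k=x_k\}$, $\beta^{\max}_k(x_k):=\max\{\beta_k(z_{k:n}):z_k=x_k\}$; threshold $\tau_k(x_k,\hat{x}_k\mid z_{k-1}):=\min\{a\ge0:\underline{Q}_k(\mathbb{I}_{\{x_k\}}-a\mathbb{I}_{\{\hat{x}_k\}}\mid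 z_{k-1})\le0\}$; $\alpha^{\mathrm{opt}}_k(\hat{x}_k\mid z_{k-1}):=\max_{x_k\neq\hat{x}_k}\beta^{\max}_k(x_k)\tau_k(x_k,\hat{x}_k\mid z_{k-1})$, and recursively for $s\in\{k+1,\dots,n\}$, $\alpha^{\mathrm{opt}}_k(z_{k:s}\mid z_{k-1}):=\alpha^{\mathrm{opt}}_k(z_{k:s-1}\mid z_{k-1})/\big(\overline{S}_{s-1}(\{o_{s-1}\}\mid z_{s-1})\overline{Q}_s(\{z_s\}\mid z_{s-1})\big)$, with $\alpha^{\mathrm{opt}}_k(z_{k:k}\mid z_{k-1}):=\alpha^{\mathrm{opt}}_k(z_k\mid z_{k-1})$. Let $\mathrm{Pos}_k(z_{k-1}):=\{z_k\in\mathcal{X}_k:\underline{Q}_k(\{z_k\}\mid z_{k-1})>0\text{ and }\underline{S}_k(\{o_k\}\mid z_k)>0\}$, and for $k<n$ define the candidate set $\mathrm{Mog}(\mathcal{X}_{k:n}\mid z_{k-1},o_{k:n}):=\bigcup_{z_k\in\mathrm{Pos}_k(z_{k-1})}z_k\oplus\mathrm{opt}(\mathcal{X}_{k+1:n}\mid z_k,o_{k+1:n})\ \cup\ \bigcup_{z_k\notin\mathrm{Pos}_k(z_{k-1})}z_k\oplus\mathcal{X}_{k+1:n}$. Optimal tree construction (for fixed $k<n$, $z_{k-1}$): first keep the states $\hat{x}_k\in\mathcal{X}_k$ with $\alpha^{\max}_k(\hat{x}_k)\ge\alpha^{\mathrm{opt}}_k(\hat{x}_k\mid z_{k-1})$.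 Then for $s=k+1,\dots,n$ in turn, for every kept prefix $\hat{x}_{k:s-1}$, keep the extensions $\hat{x}_{k:s-1}\oplus x_s$ ($x_s\in\mathcal{X}_s$) such that some element of $\mathrm{Mog}(\mathcal{X}_{k:n}\mid z_{k-1},o_{k:n})$ begins with $\hat{x}_{k:s-1}\oplus x_s$ and $\alpha^{\max}_s(x_s)\ge\alpha^{\mathrm{opt}}_k(\hat{x}_{k:s-1}\oplus x_s\mid z_{k-1})$. The output is the set of kept sequences of length $n-k+1$. *)

From HB Require Import structures.
From mathcomp Require Import all_boot all_order all_algebra.
From mathcomp Require Import boolp classical_sets reals.
Set Implicit Arguments. Unset Strict Implicit. Unset Printing Implicit Defensive.
Import Order.TTheory GRing.Theory Num.Theory.
Local Open Scope ring_scope.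
Local Open Scope classical_set_scope.

(* Finite product spaces X_{k:k+m} = X_k x X_{k+1} x ... x X_{k+m},         *)
Fixpoint tupT (F : nat -> finType) (k m : nat) : finType :=
  match m with
  | 0 => F k
  | m'.+1 => ((F k * tupT F k.+1 m')%type : finType)
  end.

Definition thead (F : nat -> finType) (k m : nat) : tupT F k m -> F k :=
  match m as m0 return tupT F k m0 -> F k with
  | 0 => fun x => x
  | _.+1 => fun x => x.1
  end.

Fixpoint tproj (F : nat -> finType) (f : forall i, F i) (k m : nat) : tupT F k m :=
  match m as m0 return tupT F k m0 with
  | 0 => f k
  | m'.+1 => (f k, tproj f k.+1 m')
  end.

(* tprefeq j u w : u and w have the same first j+1 coordinates,
   i.e. u_{k:k+j} = w_{k:k+j} *)
Fixpoint tprefeq (F : nat -> finType) (k m : nat) (j : nat) :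
    tupT F k m -> tupT F k m -> bool :=
  match m as m0 return tupT F k m0 -> tupT F k m0 -> bool with
  | 0 => fun u w => u == w
  | m'.+1 => fun u w =>
      (u.1 == w.1) && (if j is j'.+1 then tprefeq j' u.2 w.2 else true)
  end.

Section IHMM.
Variable R : realType.

Definition ind (T : eqType) (x : T) : T -> R := fun y => (y == x)%:R.

Definition coherent (T : finType) (P : (T -> R) -> R) : Prop :=
  [/\ (forall (f : T -> R) (c : R), (forall x, c <= f x) -> c <= P f),
      (forall (l : R) (f : T -> R), 0 <= l -> P (fun x => l * f x) = l * P f) &
      (forall f g : T -> R, P f + P g <= P (fun x => f x + g x))].

Definition upper (T : finType) (P : (T -> R) -> R) (f : T -> R) : R :=
  - P (fun x => - f x).

(* Independent natural extension of P1 (on T1) and P2 (on T2), on gambles on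
   T1 x T2 (de Cooman, Miranda & Zaffalon 2011, finite spaces):
   E(f) = sup { min (f - h1 - h2) : h1(.,y) in A1 for all y,
                                     h2(x,.) in A2 for all x },
   where A_i = { g : P_i(g) >= 0 }. *)
Definition indnatext (T1 T2 : finType) (P1 : (T1 -> R) -> R)
    (P2 : (T2 -> R) -> R) (f : T1 * T2 -> R) : R :=
  sup [set mu : R | exists h1 h2 : T1 * T2 -> R,
        [/\ (forall y, 0 <= P1 (fun x => h1 (x, y))),
            (forall x, 0 <= P2 (fun y => h2 (x, y))) &
            (forall w, mu <= f w - h1 w - h2 w)]].

Variables (X O : nat -> finType).
(* Q i z = \underline{Q}_i(. | z_{i-1} = z), S i z = \underline{S}_i(. | z_i = z) *)
Variable Q : forall i, X i.-1 -> (X i -> R) -> R.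
Variable S : forall i, X i -> (O i -> R) -> R.
(* the fixed output sequence (only o_1, ..., o_n are relevant) *)
Variable o : forall i, O i.

(* Joint model P_k(. | z_{k-1}) on gambles on X_{k:k+m} x O_{k:k+m}
   (with k+m = n). *)
Fixpoint Pj (k m : nat) : X k.-1 -> (tupT X k m * tupT O k m -> R) -> R :=
  match m as m0 return X k.-1 -> (tupT X k m0 * tupT O k m0 -> R) -> R with
  | 0 => fun z f => Q z (fun x => S x (fun y => f (x, y)))
  | m'.+1 => fun z f =>
      @Q k z (fun x =>
        indnatext (S x) (@Pj k.+1 m' x)
          (fun w => f ((x, w.2.1), (w.1, w.2.2))))
  end.

Definition opt (k m : nat) (z : X k.-1) : {set tupT X k m} :=
  [set xh | [forall x : tupT X k m,
     Pj z (fun w => (w.2 == tproj o k m)%:R * ((w.1 == x)%:R - (w.1 == xh)%:R))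
       <= 0]].

Definition Pos (k : nat) (z : X k.-1) : {set X k} :=
  [set x | (0 < Q z (ind x)) && (0 < S x (ind (o k)))].

(* Mog(X_{k:n} | z_{k-1}, o_{k:n}) (only meaningful for k < n, i.e. m > 0) *)
Definition Mog (k m : nat) (z : X k.-1) : {set tupT X k m} :=
  match m as m0 return {set tupT X k m0} with
  | 0 => finset.setT
  | m'.+1 => [set w | ((w.1 \in Pos z) && (w.2 \in @opt k.+1 m' w.1))
                      || (w.1 \notin Pos z)]
  end.

Fixpoint alpha (k m : nat) : tupT X k m -> R :=
  match m as m0 return tupT X k m0 -> R with
  | 0 => fun z => upper (S z) (ind (o k))
  | m'.+1 => fun z => upper (S z.1) (ind (o k))
                      * upper (@Q k.+1 z.1) (ind (thead z.2)) * alpha z.2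
  end.

Fixpoint beta (k m : nat) : tupT X k m -> R :=
  match m as m0 return tupT X k m0 -> R with
  | 0 => fun z => S z (ind (o k))
  | m'.+1 => fun z => S z.1 (ind (o k)) * @Q k.+1 z.1 (ind (thead z.2)) * beta z.2
  end.

(* maxima over {z_{k:n} : z_k = x} (all values are >= 0, so 0 is a neutral
   default for the max) *)
Definition alphamax (k m : nat) (x : X k) : R :=
  \big[Num.max/0]_(z : tupT X k m | thead z == x) alpha z.
Definition betamax (k m : nat) (x : X k) : R :=
  \big[Num.max/0]_(z : tupT X k m | thead z == x) beta z.

Definition tau (k : nat) (z : X k.-1) (x xh : X k) : R :=
  inf [set a : R | 0 <= a /\ Q z (fun y => ind x y - a * ind xh y) <= 0].

Definition aopt0 (k m : nat) (z : X k.-1) (xh : X k) : R :=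
  \big[Num.max/0]_(x : X k | x != xh) (betamax m x * tau z x xh).

(* Bat k m a j w : with a = alpha^opt_k(w_k | z_{k-1}), checks
   alpha^max_{k+j}(w_{k+j}) >= alpha^opt_k(w_{k:k+j} | z_{k-1}),
   using the recursion alpha^opt_k(w_{k:s}) =
   alpha^opt_k(w_{k:s-1}) / (Sup_{s-1}({o_{s-1}}|w_{s-1}) Qup_s({w_s}|w_{s-1})). *)
Fixpoint Bat (k m : nat) (a : R) (j : nat) : tupT X k m -> bool :=
  match m as m0 return tupT X k m0 -> bool with
  | 0 => fun w => a <= alphamax 0 w
  | m'.+1 => fun w =>
      if j is j'.+1 then
        Bat (a / (upper (S w.1) (ind (o k)) * upper (@Q k.+1 w.1) (ind (thead w.2))))
            j' w.2
      else a <= alphamax m'.+1 w.1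
  end.

(* Optimal tree construction (k < n, m = n - k).  kept j w holds iff the
   prefix w_{k:k+j} is kept at stage s = k + j of the construction. *)
Fixpoint kept (k m : nat) (z : X k.-1) (j : nat) (w : tupT X k m) : bool :=
  match j with
  | 0 => @Bat k m (@aopt0 k m z (thead w)) 0 w
  | j'.+1 => [&& @kept k m z j' w,
                 [exists u in @Mog k m z, tprefeq j'.+1 u w] &
                 @Bat k m (@aopt0 k m z (thead w)) j'.+1 w]
  end.

Definition tree_out (k m : nat) (z : X k.-1) : {set tupT X k m} :=
  [set w | @kept k m z m w].

End IHMM.
Arguments ind {R T} x _.

From Pilot Require Import Defs.
From HB Require Import structures.
From mathcomp Require Import all_boot all_order all_algebra.
From mathcomp Require Import boolp classical_sets reals.
From mathcomp Require Import ring lra.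
Import Order.TTheory GRing.Theory Num.Theory.
Local Open Scope ring_scope.
Set Implicit Arguments. Unset Strict Implicit. Unset Printing Implicit Defensive.

(* The independent natural extension factorises on gambles I_{o_k}(o) g(rest),
   so P_k(I_{o_{k:n}} h | z_{k-1}) is Q_k applied to the gamble
   y |-> S_k(I_{o_k} P_{k+1}(I_{o_{k+1:n}} h(y, .) | y) | y).  Unwinding this
   recursion, the indicator of a sequence x gets the value beta(x) Q_k({x_k})
   and its opposite the value -alpha(x) Qup_k({x_k}).  Hence xh beats every
   sequence x starting in another state iff beta(x) tau_k(x_k, xh_k) <= alpha(xh)
   for all such x, i.e. iff alpha^opt_k(xh_k) <= alpha_k(xh); and xh beats every
   sequence starting in xh_k iff its tail is optimal at time k+1 or xh_k is not
   in Pos, i.e. iff xh is in Mog.  The tree construction checks exactly these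
   two conditions.  The upper bound in the factorisation needs a linear prevision
   dominating a coherent lower prevision with a prescribed mass at one point,
   which a finite Hahn-Banach extension provides. *)

Section Indicator.
Variables (R : realType) (T : eqType).

Lemma ind_id (a : T) : ind a a = 1 :> R.
Proof. by rewrite /ind eqxx. Qed.

Lemma ind_neq (a y : T) : y != a -> ind a y = 0 :> R.
Proof. by rewrite /ind => /negbTE ->. Qed.

Lemma ind_ge0 (a y : T) : 0 <= ind a y :> R.
Proof. exact: ler0n. Qed.

Lemma ind_le1 (a y : T) : ind a y <= 1 :> R.
Proof. by rewrite /ind lern1 leq_b1. Qed.

End Indicator.

Section LowerPrevision.
Variables (R : realType) (T : finType) (P : (T -> R) -> R).
Hypothesis cP : coherent P.
Implicit Types (f g : T -> R) (c l : R).

Lemma lprev_ge_min f c : (forall x, c <= f x) -> c <= P f.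
Proof. by case: cP => + _ _; apply. Qed.

Lemma lprev_homo l f : 0 <= l -> P (fun x => l * f x) = l * P f.
Proof. by case: cP => _ + _; apply. Qed.

Lemma lprev_superadd f g : P f + P g <= P (fun x => f x + g x).
Proof. by case: cP => _ _; apply. Qed.

Lemma lprev0 : P (fun _ => 0) = 0.
Proof.
rewrite -[RHS](mul0r (P (fun _ => 0))) -lprev_homo //.
by congr P; apply: funext => x; rewrite mul0r.
Qed.

Lemma lprev_mono f g : (forall x, f x <= g x) -> P f <= P g.
Proof.
move=> fg; have := lprev_superadd f (fun x => g x - f x).
have : 0 <= P (fun x => g x - f x) by apply: lprev_ge_min => x; rewrite subr_ge0.
rewrite (_ : (fun x => f x + (g x - f x)) = g); first lra.
by apply: funext => x; rewrite addrC subrK.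
Qed.

Lemma lprev_cst c : P (fun _ => c) = c.
Proof.
apply/eqP; rewrite eq_le lprev_ge_min // andbT.
have := lprev_superadd (fun _ => c) (fun _ => - c).
have : - c <= P (fun _ => - c) by apply: lprev_ge_min.
rewrite (_ : (fun _ => c + - c) = fun _ => 0) ?lprev0; first lra.
by apply: funext => x; rewrite subrr.
Qed.

Lemma lprev_addc f c : P (fun x => f x + c) = P f + c.
Proof.
apply/eqP; rewrite eq_le; apply/andP; split; last first.
  by have := lprev_superadd f (fun _ => c); rewrite lprev_cst.
have := lprev_superadd (fun x => f x + c) (fun _ => - c).
rewrite lprev_cst (_ : (fun x => f x + c + - c) = f); first lra.
by apply: funext => x; rewrite addrK.
Qed.

Lemma lprev_le_upper f : P f <= upper P f.
Proof.
have := lprev_superadd f (fun x => - f x).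
rewrite /upper (_ : (fun x => f x + - f x) = fun _ => 0) ?lprev0; first lra.
by apply: funext => x; rewrite subrr.
Qed.

Lemma lprev_scale c f :
  P (fun x => c * f x) = if 0 <= c then c * P f else c * upper P f.
Proof.
case: ifPn => c0; first exact: lprev_homo.
rewrite (_ : (fun x => c * f x) = fun x => - c * - f x); last first.
  by apply: funext => x; rewrite mulrNN.
rewrite lprev_homo; first by rewrite /upper mulrN mulNr.
by rewrite oppr_ge0 ltW // ltNge.
Qed.

Lemma lprev_sum (I : Type) (s : seq I) (F : I -> T -> R) :
  \sum_(i <- s) P (F i) <= P (fun y => \sum_(i <- s) F i y).
Proof.
elim: s => [|i s IH].
  rewrite big_nil (_ : (fun _ => _) = fun _ => 0) ?lprev0 //.
  by apply: funext => y; rewrite big_nil.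
rewrite big_cons (_ : (fun y => _) = fun y => F i y + \sum_(j <- s) F j y); last first.
  by apply: funext => y; rewrite big_cons.
apply: le_trans (lprev_superadd _ _); lra.
Qed.

Lemma lprev_ind_ge0 (a : T) : 0 <= P (ind a).
Proof. exact/lprev_ge_min/ind_ge0. Qed.

Lemma upper_ind_ge0 (a : T) : 0 <= upper P (ind a).
Proof. exact: le_trans (lprev_ind_ge0 a) (lprev_le_upper _). Qed.

Lemma upper_subadd f g : upper P (fun t => f t + g t) <= upper P f + upper P g.
Proof.
have := lprev_superadd (fun t => - f t) (fun t => - g t).
by rewrite /upper (_ : (fun t => - f t + - g t) = fun t => - (f t + g t));
  [lra | apply: funext => t; rewrite opprD].
Qed.

Lemma upper_homo l f : 0 <= l -> upper P (fun t => l * f t) = l * upper P f.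
Proof.
move=> l0; rewrite /upper mulrN -(lprev_homo _ l0).
by congr (- P _); apply: funext => t; rewrite mulrN.
Qed.

Lemma lprev_scale_ind_le0 (a : T) c :
  (P (fun y => c * ind a y) <= 0) = (c <= 0) || (P (ind a) <= 0).
Proof.
rewrite lprev_scale; case: ifPn => [c0|]; last first.
  rewrite -ltNge => /ltW c0; rewrite c0.
  by apply/idP; apply: mulr_le0_ge0 => //; exact: upper_ind_ge0.
case: (eqVneq c 0) => [->|cn0]; first by rewrite mul0r lexx.
have cp : 0 < c by rewrite lt_def cn0.
by rewrite pmulr_rle0 // [c <= 0]leNgt cp.
Qed.

End LowerPrevision.

Section Domination.
Variables (R : realType) (T : finType).
Implicit Types (p f g : T -> R) (s : seq T).

Definition linprev p f : R := \sum_t p t * f t.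

Definition supported s f := forall t, t \notin s -> f t = 0.

Lemma linprevD p f g : linprev p (fun t => f t + g t) = linprev p f + linprev p g.
Proof. by rewrite /linprev -big_split; apply: eq_bigr => t _; rewrite mulrDr. Qed.

Lemma linprevZ p c f : linprev p (fun t => c * f t) = c * linprev p f.
Proof. by rewrite /linprev mulr_sumr; apply: eq_bigr => t _; rewrite mulrCA. Qed.

Lemma linprevN p f : linprev p (fun t => - f t) = - linprev p f.
Proof. by rewrite /linprev -sumrN; apply: eq_bigr => t _; rewrite mulrN. Qed.

Lemma linprev_ind p e : linprev p (ind e) = p e.
Proof.
rewrite /linprev (bigD1 e) //= ind_id mulr1 big1 ?addr0 // => t te.
by rewrite ind_neq ?mulr0.
Qed.

Lemma eq_linprev p f g : f =1 g -> linprev p f = linprev p g.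
Proof. by move=> fg; apply: eq_bigr => t _; rewrite fg. Qed.

Variable P : (T -> R) -> R.
Hypothesis cP : coherent P.

Definition dominated_on s p := forall f, supported s f -> linprev p f <= upper P f.

Lemma eq_upper f g : f =1 g -> upper P f = upper P g.
Proof. by move=> /funext ->. Qed.

(* The one-dimensional step of the Hahn-Banach theorem: the admissible values
   at [e] of a dominated extension form a non-empty interval. *)
Lemma extension_gap s e p : dominated_on s p -> exists c,
  (forall g, supported s g -> linprev p g - upper P (fun t => g t - ind e t) <= c) /\
  (forall g, supported s g -> c <= upper P (fun t => g t + ind e t) - linprev p g).
Proof.
move=> dom_p.
have gap g g' : supported s g -> supported s g' ->
    linprev p g - upper P (fun t => g t - ind e t)
    <= upper P (fun t => g' t + ind e t) - linprev p g'.
  move=> sg sg'; have sgg' : supported s (fun t => g t + g' t).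
    by move=> t ts; rewrite sg // sg' // addr0.
  have := dom_p _ sgg'; rewrite linprevD.
  have := upper_subadd cP (fun t => g t - ind e t) (fun t => g' t + ind e t).
  by rewrite (@eq_upper _ (fun t => g t + g' t)) => [|t]; lra.
pose L : set R := fun r => exists2 g, supported s g &
  r = linprev p g - upper P (fun t => g t - ind e t).
have ubL : has_ubound L.
  exists (upper P (fun t => 0 + ind e t) - linprev p (fun _ => 0)).
  by move=> r [g sg ->]; exact: gap.
have L_neq0 : exists r, L r by eexists; exists (fun _ => 0).
exists (sup L); split => g sg; first by apply: ub_le_sup => //; exists g.
by apply: ge_sup => // r [g' sg' ->]; exact: gap.
Qed.

Lemma extension_step s e p : e \notin s -> dominated_on s p ->
  exists p', {in s, p' =1 p} /\ dominated_on (e :: s) p'.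
Proof.
move=> es dom_p; have [c [c_ge c_le]] := extension_gap e dom_p.
exists (fun t => if t == e then c else p t); split.
  by move=> t ts; case: eqP => // te; rewrite -te ts in es.
move=> f sf; pose l := f e; pose g t := if t == e then 0 else f t.
have sg : supported s g.
  by move=> t ts; rewrite /g; case: eqP => // /eqP te; apply: sf; rewrite inE negb_or te.
have fE : f =1 fun t => g t + l * ind e t.
  by move=> t; rewrite /g /ind /l; case: eqP => [->|]; rewrite ?mulr1 ?mulr0 ?add0r ?addr0.
rewrite (eq_linprev _ fE) (eq_upper fE) linprevD linprevZ linprev_ind eqxx.
have -> : linprev (fun t => if t == e then c else p t) g = linprev p g.
  by apply: eq_bigr => t _; rewrite /g; case: eqP => // ->; rewrite !mulr0.
have [l_lt0|l_gt0|->] := ltgtP l 0.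
- have mu_gt0 : 0 < - l by rewrite oppr_gt0.
  have sgl : supported s (fun t => (- l)^-1 * g t) by move=> t ts; rewrite sg // mulr0.
  have := c_ge _ sgl; rewrite linprevZ.
  rewrite (@eq_upper _ (fun t => (- l)^-1 * (g t + l * ind e t))) => [|t]; last first.
    by field; rewrite lt_eqF.
  rewrite (upper_homo cP); last by rewrite invr_ge0 ltW.
  rewrite -mulrBr => /(ler_wpM2l (ltW mu_gt0)); rewrite mulrA mulfV ?gt_eqF // mul1r.
  lra.
- have sgl : supported s (fun t => l^-1 * g t) by move=> t ts; rewrite sg // mulr0.
  have := c_le _ sgl; rewrite linprevZ.
  rewrite (@eq_upper _ (fun t => l^-1 * (g t + l * ind e t))) => [|t]; last first.
    by field; rewrite gt_eqF.
  rewrite (upper_homo cP); last by rewrite invr_ge0 ltW.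
  rewrite -mulrBr => /(ler_wpM2l (ltW l_gt0)); rewrite mulrA mulfV ?gt_eqF // mul1r.
  lra.
- by rewrite mul0r addr0 (@eq_upper _ g) => [|t]; rewrite ?mul0r ?addr0 //; apply: dom_p.
Qed.

Lemma dominated_extension s p0 : dominated_on s p0 ->
  exists p, {in s, p =1 p0} /\ forall f, P f <= linprev p f.
Proof.
move=> dom_p0.
suff [p [p_p0 dom_p]] : exists p, {in s, p =1 p0} /\ dominated_on (enum T ++ s) p.
  have supp_all g : supported (enum T ++ s) g by move=> t; rewrite mem_cat mem_enum.
  exists p; split => // f; have := dom_p _ (supp_all (fun t => - f t)).
  rewrite linprevN /upper (_ : (fun t => - - f t) = f); first lra.
  by apply: funext => t; rewrite opprK.
elim: (enum T) => [|e r [p [p_p0 dom_p]]]; first by exists p0.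
case: (boolP (e \in r ++ s)) => ers.
  exists p; split => // f sf; apply: dom_p => t trs; apply: sf.
  by rewrite inE negb_or trs andbT; apply: contraNneq trs => ->.
have [p' [p'_p dom_p']] := extension_step ers dom_p.
by exists p'; split => // t ts; rewrite p'_p ?p_p0 // mem_cat ts orbT.
Qed.

Lemma dominating_linprev : exists p, forall f, P f <= linprev p f.
Proof.
have [f sf|p [_ dom_p]] := @dominated_extension [::] (fun _ => 0); last by exists p.
rewrite (_ : f = fun _ => 0); last by apply: funext => t; apply: sf.
rewrite /linprev big1 => [|t _]; last by rewrite mulr0.
by rewrite /upper (_ : (fun _ => - 0) = fun _ => 0) ?(lprev0 cP) ?oppr0 // oppr0.
Qed.

Lemma dominating_linprev_at e w : P (ind e) <= w -> w <= upper P (ind e) ->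
  exists p, (forall f, P f <= linprev p f) /\ p e = w.
Proof.
move=> Pe_le_w w_le_Ue.
have [|p [p_w dom_p]] := @dominated_extension [:: e] (fun _ => w).
  move=> f sf; have fE : f =1 fun t => f e * ind e t.
    move=> t; case: (eqVneq t e) => [->|te]; first by rewrite ind_id mulr1.
    by rewrite ind_neq // mulr0 sf // inE.
  rewrite (eq_linprev _ fE) (eq_upper fE) linprevZ linprev_ind.
  case: (lerP 0 (f e)) => fe0; first by rewrite (upper_homo cP) // ler_wpM2l.
  rewrite /upper (_ : (fun x => - (f e * ind e x)) = fun x => - f e * ind e x).
    rewrite (lprev_homo cP); last by rewrite oppr_ge0 ltW.
    by rewrite mulNr opprK ler_wnM2l // ltW.
  by apply: funext => t; rewrite mulNr.
by exists p; rewrite p_w ?mem_head.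
Qed.

Lemma dominating_linprev_prob p : (forall f, P f <= linprev p f) ->
  (forall t, 0 <= p t) /\ \sum_t p t = 1.
Proof.
move=> dom_p; split => [t|].
  by rewrite -linprev_ind; apply: le_trans (dom_p _); apply: (lprev_ind_ge0 cP).
have := dom_p (fun _ => 1); have := dom_p (fun _ => - 1).
rewrite (linprevN p (fun _ => 1)) !(lprev_cst cP) (_ : linprev p _ = \sum_t p t); first lra.
by apply: eq_bigr => t _; rewrite mulr1.
Qed.

End Domination.

Section IndependentNaturalExtension.
Variables (R : realType) (T1 T2 : finType).
Variables (P1 : (T1 -> R) -> R) (P2 : (T2 -> R) -> R).
Hypotheses (cP1 : coherent P1) (cP2 : coherent P2).
Implicit Types (f : T1 * T2 -> R) (mu : R).

Definition ine_bound f : set R := fun mu => exists h1 h2 : T1 * T2 -> R,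
  [/\ (forall y, 0 <= P1 (fun x => h1 (x, y))),
      (forall x, 0 <= P2 (fun y => h2 (x, y))) &
      (forall w, mu <= f w - h1 w - h2 w)].

Lemma ine_bound_const f c : (forall w, c <= f w) -> ine_bound f c.
Proof.
by exists (fun _ => 0), (fun _ => 0); split=> [y|x|w]; rewrite ?lprev0 ?subr0.
Qed.

Lemma ine_bound_scale l f mu : 0 <= l -> ine_bound f mu ->
  ine_bound (fun w => l * f w) (l * mu).
Proof.
move=> l0 [h1 [h2 [h1_ge h2_ge mu_le]]].
exists (fun w => l * h1 w), (fun w => l * h2 w); split=> [y|x|w].
- by rewrite lprev_homo // mulr_ge0.
- by rewrite lprev_homo // mulr_ge0.
- by rewrite -!mulrBr ler_wpM2l.
Qed.

Lemma ine_boundD f (g : T1 * T2 -> R) a b : ine_bound f a -> ine_bound g b ->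
  ine_bound (fun w => f w + g w) (a + b).
Proof.
move=> [h1 [h2 [h1_ge h2_ge a_le]]] [k1 [k2 [k1_ge k2_ge b_le]]].
exists (fun w => h1 w + k1 w), (fun w => h2 w + k2 w); split=> [y|x|w].
- by apply: le_trans (lprev_superadd cP1 _ _); rewrite addr_ge0.
- by apply: le_trans (lprev_superadd cP2 _ _); rewrite addr_ge0.
- by have := a_le w; have := b_le w; lra.
Qed.

(* Summing a bound certificate against a dominating linear prevision of [P1]
   kills [h1] and leaves a gamble on [T2] where [h2] is desirable. *)
Lemma ine_bound_le_dominated p f mu : (forall g, P1 g <= linprev p g) ->
  ine_bound f mu -> mu <= P2 (fun y => linprev p (fun x => f (x, y))).
Proof.
move=> dom_p [h1 [h2 [h1_ge h2_ge mu_le]]].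
have [p_ge0 p_sum1] := dominating_linprev_prob cP1 dom_p.
have pointwise y : linprev p (fun x => h2 (x, y)) + mu <= linprev p (fun x => f (x, y)).
  have : 0 <= \sum_x p x * (f (x, y) - h1 (x, y) - h2 (x, y) - mu).
    apply: sumr_ge0 => x _; rewrite mulr_ge0 //; have := mu_le (x, y); lra.
  have -> : \sum_x p x * (f (x, y) - h1 (x, y) - h2 (x, y) - mu) =
      linprev p (fun x => f (x, y)) - linprev p (fun x => h1 (x, y))
      - linprev p (fun x => h2 (x, y)) - mu * \sum_x p x.
    by rewrite /linprev mulr_sumr -!sumrB; apply: eq_bigr => x _; ring.
  by have := dom_p (fun x => h1 (x, y)); have := h1_ge y; rewrite p_sum1; lra.
apply: le_trans (lprev_mono cP2 pointwise); rewrite lprev_addc //.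
have := lprev_sum cP2 (index_enum T1) (fun x y => p x * h2 (x, y)).
have : 0 <= \sum_(x <- index_enum T1) P2 (fun y => p x * h2 (x, y)).
  by apply: sumr_ge0 => x _; rewrite lprev_homo // mulr_ge0.
rewrite /linprev; lra.
Qed.

Lemma ine_bound_nonempty f : exists mu, ine_bound f mu.
Proof.
exists (- \sum_w `|f w|); apply: ine_bound_const => w.
have : `|f w| <= \sum_w `|f w| by rewrite (bigD1 w) //= lerDl sumr_ge0.
by have := ler_norm (- f w); rewrite normrN; lra.
Qed.

Lemma indnatext_ge f mu : ine_bound f mu -> mu <= indnatext P1 P2 f.
Proof.
move=> f_mu; apply: ub_le_sup => //.
have [p dom_p] := dominating_linprev cP1.
exists (P2 (fun y => linprev p (fun x => f (x, y)))).
by move=> nu; exact: ine_bound_le_dominated.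
Qed.

Lemma indnatext_le f b : ubound (ine_bound f) b -> indnatext P1 P2 f <= b.
Proof. exact/ge_sup/ine_bound_nonempty. Qed.

Lemma indnatext0 : indnatext P1 P2 (fun _ => 0) = 0.
Proof.
apply/eqP; rewrite eq_le indnatext_ge ?andbT; last exact: ine_bound_const.
have [p dom_p] := dominating_linprev cP1.
apply: indnatext_le => mu /(ine_bound_le_dominated dom_p).
rewrite (_ : (fun y => linprev p (fun _ => 0)) = fun _ => 0) ?(lprev0 cP2) //.
by apply: funext => y; rewrite /linprev big1 // => x _; rewrite mulr0.
Qed.

Lemma indnatext_homo_ge l f : 0 < l ->
  l * indnatext P1 P2 f <= indnatext P1 P2 (fun w => l * f w).
Proof.
move=> l_gt0; rewrite mulrC -ler_pdivlMr //; apply: indnatext_le => mu f_mu.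
rewrite ler_pdivlMr // mulrC; apply: indnatext_ge.
exact: ine_bound_scale (ltW l_gt0) f_mu.
Qed.

Lemma indnatext_superadd f (g : T1 * T2 -> R) :
  indnatext P1 P2 f + indnatext P1 P2 g <= indnatext P1 P2 (fun w => f w + g w).
Proof.
have Eg_le a : ine_bound f a ->
    indnatext P1 P2 g <= indnatext P1 P2 (fun w => f w + g w) - a.
  move=> f_a; apply: indnatext_le => b g_b.
  by have := indnatext_ge (ine_boundD f_a g_b); lra.
suff : indnatext P1 P2 f <= indnatext P1 P2 (fun w => f w + g w) - indnatext P1 P2 g.
  by lra.
by apply: indnatext_le => a /Eg_le; lra.
Qed.

Lemma indnatext_coherent : coherent (indnatext P1 P2).
Proof.
split => [f c c_le | l f l_ge0 | f g].
- exact/indnatext_ge/ine_bound_const.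
- have [->|l_gt0] := eqVneq l 0.
    rewrite mul0r (_ : (fun _ => _) = fun _ => 0) ?indnatext0 //.
    by apply: funext => w; rewrite mul0r.
  have {l_ge0}l_gt0 : 0 < l by rewrite lt_def l_gt0.
  apply/eqP; rewrite eq_le indnatext_homo_ge // andbT.
  rewrite -ler_pdivrMl // (le_trans (indnatext_homo_ge _ _)) ?invr_gt0 //.
  by rewrite (_ : (fun w => _) = f) //; apply: funext => w; rewrite mulKf ?gt_eqF.
- exact: indnatext_superadd.
Qed.

(* The upper bound sums against a linear prevision dominating [P1] whose mass
   at [e] is [P1 (ind e)] or [upper P1 (ind e)], according to the sign of [P2 g]. *)
Lemma indnatext_ind_mul e (g : T2 -> R) :
  indnatext P1 P2 (fun w => ind e w.1 * g w.2) = P1 (fun x => P2 g * ind e x).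
Proof.
set v := P2 g; apply/eqP; rewrite eq_le; apply/andP; split.
  pose w := if 0 <= v then P1 (ind e) else upper P1 (ind e).
  have [p [dom_p p_e]] : exists p, (forall h, P1 h <= linprev p h) /\ p e = w.
    apply: (dominating_linprev_at cP1); rewrite /w;
      by case: ifP => _; rewrite ?(lprev_le_upper cP1) ?lexx.
  have [p_ge0 _] := dominating_linprev_prob cP1 dom_p.
  apply: indnatext_le => mu /(ine_bound_le_dominated dom_p).
  rewrite (_ : (fun y => _) = fun y => p e * g y); last first.
    apply: funext => y; rewrite (@eq_linprev _ _ p _ (fun x => g y * ind e x)) => [|x].
      by rewrite linprevZ linprev_ind mulrC.
    by rewrite mulrC.
  by rewrite lprev_homo // lprev_scale // p_e /w; case: ifP; rewrite mulrC.
apply: indnatext_ge.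
exists (fun w => v * ind e w.1 - P1 (fun x => v * ind e x)),
       (fun w => ind e w.1 * (g w.2 - v)); split=> [y|x|w] /=.
- by rewrite (lprev_addc cP1 (fun x => v * ind e x)) subrr.
- by rewrite lprev_homo ?ind_ge0 // (lprev_addc cP2) subrr mulr0.
- by rewrite le_eqVlt; apply/orP; left; apply/eqP; ring.
Qed.

End IndependentNaturalExtension.

Lemma coherent_comp (R : realType) (T W A : finType) (P : (T -> R) -> R)
    (E : T -> (W -> R) -> R) (join : T -> W -> A) :
  coherent P -> (forall x, coherent (E x)) ->
  coherent (fun f : A -> R => P (fun x => E x (fun w => f (join x w)))).
Proof.
move=> cP cE; split => [f c c_le | l f l_ge0 | f g].
- by apply: lprev_ge_min => // x; apply: lprev_ge_min.
- rewrite -lprev_homo //; congr P; apply: funext => x; exact: lprev_homo.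
- apply: le_trans (lprev_superadd cP _ _) _; apply: lprev_mono => // x.
  exact: lprev_superadd.
Qed.

Lemma bigmax_mulr_le (R : realType) (I : finType) (P : pred I) (F : I -> R) t b :
  0 <= t -> 0 <= b ->
  ((\big[Num.max/0]_(i | P i) F i) * t <= b) = [forall i, P i ==> (F i * t <= b)].
Proof.
move=> t_ge0 b_ge0; apply/idP/forallP => [max_le i | all_le].
  apply/implyP => Pi; apply: le_trans max_le; rewrite ler_wpM2r //.
  exact: le_bigmax_cond.
have [->|t_neq0] := eqVneq t 0; first by rewrite mulr0.
have t_gt0 : 0 < t by rewrite lt_def t_neq0.
rewrite -ler_pdivlMr //; apply/bigmax_leP; split => [|i Pi]; first by rewrite divr_ge0.
by rewrite ler_pdivlMr // (implyP (all_le i)).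
Qed.

Section Tuples.
Variable F : nat -> finType.

Lemma tprefeq_refl k m j (w : tupT F k m) : tprefeq j w w.
Proof.
elim: m k j w => [|m IH] k j w /=; first exact: eqxx.
by rewrite eqxx; case: j => // j; exact: IH.
Qed.

Lemma tprefeq_full k m (u w : tupT F k m) : tprefeq m u w -> u = w.
Proof.
elim: m k u w => [|m IH] k u w /=; first by move/eqP.
by case: u w => u1 u2 [w1 w2] /andP [/= /eqP -> /IH ->].
Qed.

End Tuples.

Section HiddenMarkovModel.
Variables (R : realType) (X O : nat -> finType).
Variable Q : forall i, X i.-1 -> (X i -> R) -> R.
Variable S : forall i, X i -> (O i -> R) -> R.
Arguments Q : clear implicits.
Arguments S : clear implicits.
Variables (n : nat) (o : forall i, O i).
Hypothesis Q_coherent : forall i (z : X i.-1), (1 <= i <= n)%N -> coherent (Q i z).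
Hypothesis S_coherent : forall i (z : X i), (1 <= i <= n)%N -> coherent (S i z).
Hypothesis Q_pos : forall i (z : X i.-1) (x : X i), (1 <= i <= n)%N ->
  0 < upper (Q i z) (ind x).
Hypothesis S_pos : forall i (z : X i) (y : O i), (1 <= i <= n)%N ->
  0 < upper (S i z) (ind y).

Definition in_horizon k m := (0 < k)%N && (k + m <= n)%N.

Lemma in_horizonS k m : in_horizon k m.+1 -> in_horizon k.+1 m.
Proof. by rewrite /in_horizon addSnnS => /andP[_ ->]. Qed.

Lemma in_horizon_first k m : in_horizon k m -> (1 <= k <= n)%N.
Proof. by case/andP => k_gt0 km; rewrite k_gt0 (leq_trans (leq_addr m k) km). Qed.

Lemma in_horizon_second k m : in_horizon k m.+1 -> (1 <= k.+1 <= n)%N.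
Proof. by move/in_horizonS/in_horizon_first. Qed.

Lemma Pj_coherent k m (z : X k.-1) : in_horizon k m -> coherent (@Pj R X O Q S k m z).
Proof.
elim: m k z => [|m IH] k z hk; have k_range := in_horizon_first hk.
  apply: (@coherent_comp _ _ _ _ (Q k z) (S k) (fun x y => (x, y))).
    exact: Q_coherent.
  by move=> x; exact: S_coherent.
apply: (@coherent_comp _ _ _ _ (Q k z)
  (fun x => indnatext (S k x) (@Pj R X O Q S k.+1 m x))
  (fun x w => ((x, w.2.1), (w.1, w.2.2)))).
  exact: Q_coherent.
move=> x; apply: indnatext_coherent; first exact: S_coherent.
exact: IH (in_horizonS hk).
Qed.

(* [Pobs z h] is P_k(I_{o_{k:n}} h | z_{k-1}) and [Sobs x c] is S_k(c I_{o_k} | x);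
   [Phead y h] is the value at [y] of the gamble to which [Q k z] is applied in
   [Pobs z h] (see [Pobs_head]). *)
Definition Pobs k m (z : X k.-1) (h : tupT X k m -> R) : R :=
  Pj Q S z (fun w => (w.2 == tproj o k m)%:R * h w.1).

Definition Sobs k (x : X k) (c : R) : R := S k x (fun y => c * ind (o k) y).

Definition Phead k m (y : X k) : (tupT X k m -> R) -> R :=
  match m as m0 return (tupT X k m0 -> R) -> R with
  | 0 => fun h => Sobs y (h y)
  | m'.+1 => fun h => Sobs y (@Pobs k.+1 m' y (fun xs => h (y, xs)))
  end.

Lemma Sobs_scale k (x : X k) c : (1 <= k <= n)%N -> Sobs x c =
  if 0 <= c then c * S k x (ind (o k)) else c * upper (S k x) (ind (o k)).
Proof. by move=> k_range; rewrite /Sobs lprev_scale //; exact: S_coherent. Qed.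

Lemma Sobs0 k (x : X k) : (1 <= k <= n)%N -> Sobs x 0 = 0.
Proof. by move=> k_range; rewrite Sobs_scale // lexx mul0r. Qed.

Lemma Pobs_head k m (z : X k.-1) (h : tupT X k m -> R) : in_horizon k m ->
  Pobs z h = Q k z (fun y => Phead y h).
Proof.
case: m h => [|m] h hk; congr (Q k z); apply: funext => x.
  by rewrite /Sobs; congr (S k x); apply: funext => y; rewrite mulrC.
have cS := S_coherent x (in_horizon_first hk).
have cPj := @Pj_coherent k.+1 m x (in_horizonS hk).
rewrite /= /Sobs /Pobs -(indnatext_ind_mul cS cPj); congr indnatext.
by apply: funext => -[y [xs ys]] /=; rewrite xpair_eqE -mulnb natrM mulrA.
Qed.

Lemma eq_Phead k m (y : X k) (h h' : tupT X k m -> R) :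
  (forall w, Defs.thead w = y -> h w = h' w) -> Phead y h = Phead y h'.
Proof.
case: m h h' => [|m] h h' hh /=; first by rewrite hh.
by congr Sobs; congr Pobs; apply: funext => xs; exact: hh.
Qed.

Lemma Phead_vanish k m (y : X k) (h : tupT X k m -> R) : in_horizon k m ->
  (forall w, Defs.thead w = y -> h w = 0) -> Phead y h = 0.
Proof.
move=> hk /eq_Phead -> {h}; have k_range := in_horizon_first hk.
case: m hk => [|m] hk /=; first exact: Sobs0.
rewrite /Pobs (_ : (fun w => _) = fun _ => 0) ?lprev0 ?Sobs0 //.
  exact: Pj_coherent (in_horizonS hk).
by apply: funext => w; rewrite mulr0.
Qed.

Lemma Pobs_concentrated k m (z : X k.-1) (h : tupT X k m -> R) a c :
  in_horizon k m -> (forall y, Phead y h = c * ind a y) ->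
  Pobs z h = if 0 <= c then c * Q k z (ind a) else c * upper (Q k z) (ind a).
Proof.
move=> hk hP; rewrite Pobs_head // -lprev_scale; last exact/Q_coherent/in_horizon_first/hk.
by congr (Q k z); apply: funext.
Qed.

Lemma beta_ge0 k m (x : tupT X k m) : in_horizon k m -> 0 <= beta Q S o x.
Proof.
elim: m k x => [|m IH] k x hk; have k_range := in_horizon_first hk.
  exact/lprev_ind_ge0/S_coherent.
case: x => x1 x2; rewrite /= !mulr_ge0 ?IH ?(in_horizonS hk) //.
  exact/lprev_ind_ge0/S_coherent.
exact/lprev_ind_ge0/Q_coherent/in_horizon_second/hk.
Qed.

Lemma alpha_gt0 k m (x : tupT X k m) : in_horizon k m -> 0 < alpha Q S o x.
Proof.
elim: m k x => [|m IH] k x hk; have k_range := in_horizon_first hk.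
  exact: S_pos.
case: x => x1 x2; rewrite /= !mulr_gt0 ?IH ?(in_horizonS hk) ?S_pos //.
exact/Q_pos/in_horizon_second/hk.
Qed.

Lemma Phead_indicator k m (y : X k) (x : tupT X k m) : in_horizon k m ->
  Phead y (fun w => (w == x)%:R) = beta Q S o x * ind (Defs.thead x) y.
Proof.
elim: m k y x => [|m IH] k y x hk; have k_range := in_horizon_first hk.
  case: (eqVneq y x) => [->|yx] /=; last by rewrite (negbTE yx) Sobs0 // ind_neq ?mulr0.
  by rewrite eqxx Sobs_scale // ler01 mul1r ind_id mulr1.
case: x => x1 x2; case: (eqVneq y x1) => [->|yx]; last first.
  rewrite ind_neq ?mulr0 // Phead_vanish // => -[y' xs] /= ->.
  by rewrite xpair_eqE (negbTE yx).
have hk' := in_horizonS hk.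
rewrite /= (_ : (fun xs => _) = fun xs => (xs == x2)%:R); last first.
  by apply: funext => xs; rewrite xpair_eqE eqxx.
rewrite (@Pobs_concentrated k.+1 _ x1 _ _ _ hk' (fun y => IH _ y x2 hk')) beta_ge0 //.
rewrite Sobs_scale // mulr_ge0 ?beta_ge0 //; last first.
  exact/lprev_ind_ge0/Q_coherent/in_horizon_second/hk.
by rewrite ind_id; ring.
Qed.

Lemma Phead_neg_indicator k m (y : X k) (x : tupT X k m) : in_horizon k m ->
  Phead y (fun w => - (w == x)%:R) = - alpha Q S o x * ind (Defs.thead x) y.
Proof.
have neg (c : R) : 0 < c -> (0 <= - c) = false.
  by move=> c_gt0; rewrite oppr_ge0 leNgt c_gt0.
elim: m k y x => [|m IH] k y x hk; have k_range := in_horizon_first hk.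
  case: (eqVneq y x) => [->|yx] /=.
    by rewrite eqxx Sobs_scale // neg ?ltr01 // ind_id mulr1 mulN1r.
  by rewrite (negbTE yx) oppr0 Sobs0 // ind_neq ?mulr0.
case: x => x1 x2; case: (eqVneq y x1) => [->|yx]; last first.
  rewrite ind_neq ?mulr0 // Phead_vanish // => -[y' xs] /= ->.
  by rewrite xpair_eqE (negbTE yx) oppr0.
have hk' := in_horizonS hk.
rewrite /= (_ : (fun xs => _) = fun xs => - (xs == x2)%:R); last first.
  by apply: funext => xs; rewrite xpair_eqE eqxx.
have pos_alpha2 := alpha_gt0 x2 hk'.
have pos_Q := @Q_pos k.+1 x1 (Defs.thead x2) (in_horizon_second hk).
rewrite (@Pobs_concentrated k.+1 _ x1 _ _ _ hk' (fun y => IH _ y x2 hk')).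
rewrite mulNr neg ?mulr_gt0 //.
rewrite Sobs_scale // mulNr neg ?mulr_gt0 // ind_id; ring.
Qed.

Lemma Pobs_diff_heads k m (z : X k.-1) (x xh : tupT X k m) : in_horizon k m ->
  Defs.thead x != Defs.thead xh ->
  Pobs z (fun w => (w == x)%:R - (w == xh)%:R) =
  Q k z (fun y => beta Q S o x * ind (Defs.thead x) y
                  - alpha Q S o xh * ind (Defs.thead xh) y).
Proof.
move=> hk heads; rewrite Pobs_head //; congr (Q k z); apply: funext => y.
have other_head (u w : tupT X k m) : Defs.thead w != Defs.thead u -> (w == u) = false.
  by apply: contraNF => /eqP ->.
have heads' : Defs.thead xh != Defs.thead x by rewrite eq_sym.
case: (eqVneq y (Defs.thead x)) => [->|yx].
  rewrite (@eq_Phead _ _ _ _ (fun w => (w == x)%:R)) => [|w wy].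
    by rewrite Phead_indicator // ind_id ind_neq // mulr0 subr0.
  by rewrite (other_head xh w) ?wy // subr0.
case: (eqVneq y (Defs.thead xh)) => [->|yxh].
  rewrite (@eq_Phead _ _ _ _ (fun w => - (w == xh)%:R)) => [|w wy].
    by rewrite Phead_neg_indicator // ind_id ind_neq // mulr0 sub0r mulNr.
  by rewrite (other_head x w) ?wy // sub0r.
rewrite !ind_neq // !mulr0 subrr Phead_vanish // => w wy.
by rewrite !other_head ?wy // subrr.
Qed.

Lemma Pobs_same_head_le0 k m (z : X k.-1) a (x' xh' : tupT X k.+1 m) :
  in_horizon k m.+1 ->
  (Pobs z (fun w : tupT X k m.+1 => (w == (a, x'))%:R - (w == (a, xh'))%:R) <= 0) =
  (@Pobs k.+1 m a (fun xs => (xs == x')%:R - (xs == xh')%:R) <= 0)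
  || (a \notin Pos Q S o z).
Proof.
move=> hk; have k_range := in_horizon_first hk.
set v := @Pobs k.+1 m a _.
rewrite Pobs_head // (_ : (fun y => _) = fun y => Sobs a v * ind a y); last first.
  apply: funext => y; case: (eqVneq y a) => [->|ya].
    rewrite ind_id mulr1 /=; congr (Sobs a (@Pobs k.+1 m a _)).
    by apply: funext => xs; rewrite !xpair_eqE eqxx.
  rewrite ind_neq ?mulr0 // Phead_vanish // => -[y' xs] /= ->.
  by rewrite !xpair_eqE (negbTE ya) subrr.
rewrite lprev_scale_ind_le0; last exact: Q_coherent.
rewrite /Sobs lprev_scale_ind_le0; last exact: S_coherent.
by rewrite inE negb_and -!leNgt -orbA [_ || (Q _ _ _ <= 0)]orbC.
Qed.

Section Threshold.
Variables (k : nat) (z : X k.-1) (x xh : X k).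
Hypothesis k_range : (1 <= k <= n)%N.

Let cQ := Q_coherent z k_range.
Let excess (a : R) := Q k z (fun y => ind x y - a * ind xh y).

Lemma excess_nonincreasing a b : a <= b -> excess b <= excess a.
Proof.
move=> ab; apply: lprev_mono => // y.
by rewrite lerD2l lerN2 ler_wpM2r // ind_ge0.
Qed.

Lemma excess_lipschitz a b : a <= b -> excess a <= excess b + (b - a).
Proof.
move=> ab; rewrite /excess -(lprev_addc cQ); apply: lprev_mono => // y.
have : (b - a) * ind xh y <= b - a by rewrite ler_piMr ?subr_ge0 ?ind_le1.
rewrite mulrBl; lra.
Qed.

Lemma excess_le a : 0 <= a ->
  excess a <= upper (Q k z) (ind x) - a * upper (Q k z) (ind xh).
Proof.
move=> a_ge0.
have := lprev_superadd cQ (fun y => ind x y - a * ind xh y) (fun y => - ind x y).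
rewrite (_ : (fun y => _ + - ind x y) = fun y => a * - ind xh y); last first.
  by apply: funext => y; rewrite mulrN addrAC subrr add0r.
by rewrite lprev_homo // /upper /excess; lra.
Qed.

Let threshold_set (a : R) := 0 <= a /\ excess a <= 0.

Lemma threshold_set_witness :
  threshold_set (upper (Q k z) (ind x) / upper (Q k z) (ind xh)).
Proof.
have Ux_gt0 := Q_pos z x k_range; have Uxh_gt0 := Q_pos z xh k_range.
split; first by rewrite divr_ge0 ?ltW.
by have := excess_le (divr_ge0 (ltW Ux_gt0) (ltW Uxh_gt0)); rewrite mulfVK ?gt_eqF // subrr.
Qed.

Lemma has_inf_threshold_set : has_inf threshold_set.
Proof. by split; [eexists; exact: threshold_set_witness | exists 0 => a []]. Qed.

Lemma tau_ge0 : 0 <= tau Q z x xh.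
Proof. by apply: lb_le_inf => [|a []]; [eexists; exact: threshold_set_witness|]. Qed.

Lemma excess_tau_le0 : excess (tau Q z x xh) <= 0.
Proof.
rewrite leNgt; apply/negP => excess_gt0.
have [b [b_ge0 excess_b] b_lt] := inf_adherent excess_gt0 has_inf_threshold_set.
have tau_le_b : tau Q z x xh <= b.
  by apply: ge_inf; [case: has_inf_threshold_set | split].
by have := excess_lipschitz tau_le_b; rewrite -[inf _]/(tau Q z x xh) in b_lt; lra.
Qed.

Lemma excess_le0_tau a : 0 <= a -> (excess a <= 0) = (tau Q z x xh <= a).
Proof.
move=> a_ge0; apply/idP/idP => [excess_le0|tau_le_a].
  by apply: ge_inf => //; case: has_inf_threshold_set.
exact: le_trans (excess_nonincreasing tau_le_a) excess_tau_le0.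
Qed.

Lemma tauP c d : 0 <= c -> 0 <= d ->
  (Q k z (fun y => c * ind x y - d * ind xh y) <= 0) = (c * tau Q z x xh <= d).
Proof.
move=> c_ge0 d_ge0; have [->|c_neq0] := eqVneq c 0.
  rewrite mul0r d_ge0 (_ : (fun y => _) = fun y => - d * ind xh y); last first.
    by apply: funext => y; rewrite mul0r sub0r mulNr.
  by rewrite lprev_scale_ind_le0 // oppr_le0 d_ge0.
have c_gt0 : 0 < c by rewrite lt_def c_neq0.
rewrite (_ : (fun y => _) = fun y => c * (ind x y - d / c * ind xh y)); last first.
  by apply: funext => y; rewrite mulrBr mulrA mulrCA mulfV ?mulr1.
rewrite lprev_homo // -/(excess _) pmulr_rle0 // excess_le0_tau ?divr_ge0 //.
by rewrite ler_pdivlMr // mulrC.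
Qed.

End Threshold.

Lemma aopt0_le_alpha k m (z : X k.-1) (xh : tupT X k m) : in_horizon k m ->
  (aopt0 Q S o m z (Defs.thead xh) <= alpha Q S o xh) =
  [forall x : tupT X k m, (Defs.thead x != Defs.thead xh) ==>
     (Pobs z (fun w => (w == x)%:R - (w == xh)%:R) <= 0)].
Proof.
move=> hk; have k_range := in_horizon_first hk.
have alpha_ge0 := ltW (alpha_gt0 xh hk).
have cmp (x : tupT X k m) : Defs.thead x != Defs.thead xh ->
    (Pobs z (fun w => (w == x)%:R - (w == xh)%:R) <= 0)
    = (beta Q S o x * tau Q z (Defs.thead x) (Defs.thead xh) <= alpha Q S o xh).
  by move=> hx; rewrite Pobs_diff_heads // tauP ?beta_ge0.
rewrite /aopt0; apply/bigmax_leP/forallP => [[_ max_le] x | all_le].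
  apply/implyP => hx; rewrite cmp //; move: (max_le _ hx).
  by rewrite /betamax bigmax_mulr_le ?tau_ge0 // => /forallP /(_ x); rewrite eqxx.
split=> // y hy; rewrite /betamax bigmax_mulr_le ?tau_ge0 //.
apply/forallP => x; apply/implyP => /eqP hx; rewrite -hx -cmp ?hx //.
by apply: (implyP (all_le x)); rewrite hx.
Qed.

Lemma mem_Mog k m (z : X k.-1) (xh : tupT X k m.+1) : in_horizon k m.+1 ->
  (xh \in Mog Q S o m.+1 z) =
  [forall x2 : tupT X k.+1 m,
     Pobs z (fun w : tupT X k m.+1 => (w == (xh.1, x2))%:R - (w == xh)%:R) <= 0].
Proof.
case: xh => a xh' hk /=.
have -> : ((a, xh') \in Mog Q S o m.+1 z) =
    (xh' \in @opt _ _ _ Q S o k.+1 m a) || (a \notin Pos Q S o z).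
  by rewrite inE /= orb_andl orbN.
case: (boolP (a \in Pos Q S o z)) => a_pos /=; last first.
  by rewrite orbT; apply/esym/forallP => x2; rewrite Pobs_same_head_le0 // a_pos orbT.
rewrite orbF inE; apply/forallP/forallP => le0 x2; have := le0 x2.
  by rewrite Pobs_same_head_le0 // a_pos orbF.
by rewrite Pobs_same_head_le0 // a_pos orbF.
Qed.

Lemma mem_opt k m (z : X k.-1) (xh : tupT X k m.+1) : in_horizon k m.+1 ->
  (xh \in opt Q S o m.+1 z) =
  (aopt0 Q S o m.+1 z xh.1 <= alpha Q S o xh) && (xh \in Mog Q S o m.+1 z).
Proof.
move=> hk; rewrite (aopt0_le_alpha z xh hk) (mem_Mog z xh hk) inE.
apply/forallP/andP => [opt_xh | [/forallP diff /forallP same] [x1 x2]].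
  by split; apply/forallP => x; [apply/implyP => _|]; exact: opt_xh.
case: (eqVneq x1 xh.1) => [->|ne]; first exact: same.
exact: (implyP (diff (x1, x2))).
Qed.

Lemma alphamax0 k (w : X k) : (1 <= k <= n)%N ->
  alphamax Q S o 0 w = alpha Q S o (w : tupT X k 0).
Proof.
move=> k_range; rewrite /alphamax (bigmaxD1 w) //= big_pred0 => [|y]; last first.
  by case: eqVneq.
by rewrite max_l // ltW // S_pos.
Qed.

Lemma Bat_full k m a (w : tupT X k m) : in_horizon k m ->
  Bat Q S o a m w = (a <= alpha Q S o w).
Proof.
elim: m k a w => [|m IH] k a w hk; have k_range := in_horizon_first hk.
  by rewrite /= alphamax0.
case: w => w1 w2 /=; rewrite IH ?(in_horizonS hk) // ler_pdivrMr; first by rewrite mulrC.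
by rewrite mulr_gt0 ?S_pos ?(@Q_pos k.+1) ?(in_horizon_second hk).
Qed.

Lemma Bat_mono k m a j (w : tupT X k m) : in_horizon k m -> (j <= m)%N ->
  a <= alpha Q S o w -> Bat Q S o a j w.
Proof.
elim: m k a j w => [|m IH] k a j w hk jm a_le; have k_range := in_horizon_first hk.
  by rewrite /= alphamax0.
case: w a_le => w1 w2 a_le; case: j jm => [|j] jm /=.
  by apply: le_trans a_le _; exact: (@le_bigmax_cond _ _ _ _ ((w1, w2) : tupT X k m.+1)).
apply: IH => //; first exact: in_horizonS.
rewrite ler_pdivrMr 1?mulrC //.
by rewrite mulr_gt0 ?S_pos ?(@Q_pos k.+1) ?(in_horizon_second hk).
Qed.

(* The intermediate checks of the construction are implied by the final one:
   the thresholds along a prefix only rescale the condition on [alpha]. *)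
Lemma mem_tree_out k m (z : X k.-1) (w : tupT X k m.+1) : in_horizon k m.+1 ->
  (w \in tree_out Q S o m.+1 z) =
  (aopt0 Q S o m.+1 z w.1 <= alpha Q S o w) && (w \in Mog Q S o m.+1 z).
Proof.
move=> hk; rewrite inE; apply/idP/andP => [|[a_le w_Mog]].
  case/and3P => _ /existsP [u /andP [u_Mog /tprefeq_full u_w]] last_check.
  by rewrite -u_w; split => //; rewrite -(Bat_full _ _ hk) u_w.
suff kept_prefix j : (j <= m.+1)%N -> kept Q S o z j w by exact: kept_prefix.
elim: j => [|j IH] jm; first exact: Bat_mono.
apply/and3P; split; first exact/IH/ltnW.
  by apply/existsP; exists w; rewrite w_Mog tprefeq_refl.
exact: Bat_mono.
Qed.

End HiddenMarkovModel.

Theorem theorem3 (R : realType) (X O : nat -> finType)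
    (Q : forall i, X i.-1 -> (X i -> R) -> R)
    (S : forall i, X i -> (O i -> R) -> R)
    (n : nat) (o : forall i, O i) :
  #|X 0%N| = 1%N ->
  (forall i, (1 <= i <= n)%N -> (0 < #|X i|)%N) ->
  (forall i, (1 <= i <= n)%N -> (0 < #|O i|)%N) ->
  (forall i (z : X i.-1), (1 <= i <= n)%N -> coherent (Q i z)) ->
  (forall i (z : X i), (1 <= i <= n)%N -> coherent (S i z)) ->
  (forall i (z : X i.-1) (x : X i), (1 <= i <= n)%N ->
     0 < upper (Q i z) (ind x)) ->
  (forall i (z : X i) (y : O i), (1 <= i <= n)%N ->
     0 < upper (S i z) (ind y)) ->
  forall (k : nat) (z : X k.-1), (1 <= k < n)%N ->
    tree_out Q S o (n - k)%N z = opt Q S o (n - k)%N z.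
Proof.
move=> _ _ _ Q_coherent S_coherent Q_pos S_pos k z /andP [k_gt0 k_lt_n].
have : in_horizon n k (n - k) by rewrite /in_horizon k_gt0 subnKC ?leqnn // ltnW.
have : (0 < n - k)%N by rewrite subn_gt0.
case: (n - k)%N => // m _ hk; apply/setP => w.
rewrite (mem_tree_out o Q_pos S_pos z w hk).
by rewrite (mem_opt o Q_coherent S_coherent Q_pos S_pos z w hk).
Qed.
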